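(* If $F$ is a non-abelian free metabelian Lie algebra over a field $k$, then $\mathrm{Fit}(F)=F^2$.
   Context: A Lie algebra is metabelian if $(a\circ b)\circ(c\circ d)=0$ identically; free metabelian means free in the variety of metabelian Lie $k$-algebras. $F^2$ is the ideal spanned by all products $a\circ b$; $\mathrm{Fit}(F)$ (Fitting radical) is the ideal generated by all elements lying in nilpotent ideals of $F$. *)

(* Lie algebras over a field K, modelled as a K-module
   (lmodType K, possibly infinite dimensional) together with a bracket. *)
From HB Require Import structures.
From mathcomp Require Import all_boot all_order all_algebra.
Set Implicit Arguments. Unset Strict Implicit. Unset Printing Implicit Defensive.
Import GRing.Theory.
Local Open Scope ring_scope.

Section Lie.
Variable K : fieldType.

Definition is_lie (L : lmodType K) (br : L -> L -> L) : Prop :=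
  [/\ (forall a x y (c : K), br (c *: x + y) a = c *: br x a + br y a),
      (forall a x y (c : K), br a (c *: x + y) = c *: br a x + br a y),
      (forall x, br x x = 0) &
      (forall x y z, br x (br y z) + br y (br z x) + br z (br x y) = 0)].

Definition metabelian (L : lmodType K) (br : L -> L -> L) : Prop :=
  forall a b c d, br (br a b) (br c d) = 0.

Definition lie_hom (L M : lmodType K) (brL : L -> L -> L) (brM : M -> M -> M)
  (g : L -> M) : Prop :=
  (forall (c : K) x y, g (c *: x + y) = c *: g x + g y) /\
  (forall x y, g (brL x y) = brM (g x) (g y)).

Definition free_metabelian (L : lmodType K) (br : L -> L -> L) : Prop :=
  is_lie br /\ metabelian br /\
  exists (X : Type) (iota : X -> L),
    forall (M : lmodType K) (brM : M -> M -> M),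
      is_lie brM -> metabelian brM ->
      forall f : X -> M,
        exists g : L -> M,
          [/\ lie_hom br brM g, (forall i, g (iota i) = f i) &
              (forall h : L -> M, lie_hom br brM h ->
                 (forall i, h (iota i) = f i) -> forall x, h x = g x)].

Inductive sq_span (L : lmodType K) (br : L -> L -> L) : L -> Prop :=
  | sq_br a b : sq_span br (br a b)
  | sq_0 : sq_span br 0
  | sq_lin (c : K) x y : sq_span br x -> sq_span br y -> sq_span br (c *: x + y).

Definition is_ideal (L : lmodType K) (br : L -> L -> L) (I : L -> Prop) : Prop :=
  [/\ I 0, (forall (c : K) x y, I x -> I y -> I (c *: x + y)) &
      (forall a x, I x -> I (br a x) /\ I (br x a))].

(* lower central series of I viewed as a Lie algebra:
   C^0 = I, C^{n+1} = span [I, C^n] *)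
Inductive lcs (L : lmodType K) (br : L -> L -> L) (I : L -> Prop) : nat -> L -> Prop :=
  | lcs_base x : I x -> lcs br I 0 x
  | lcs_br n a b : I a -> lcs br I n b -> lcs br I n.+1 (br a b)
  | lcs_0 n : lcs br I n.+1 0
  | lcs_lin n (c : K) x y : lcs br I n.+1 x -> lcs br I n.+1 y ->
      lcs br I n.+1 (c *: x + y).

Definition nilpotent_ideal (L : lmodType K) (br : L -> L -> L) (I : L -> Prop) :=
  is_ideal br I /\ exists n, forall x, lcs br I n x -> x = 0.

Inductive gen_ideal (L : lmodType K) (br : L -> L -> L) (S : L -> Prop) : L -> Prop :=
  | gi_base x : S x -> gen_ideal br S x
  | gi_0 : gen_ideal br S 0
  | gi_lin (c : K) x y : gen_ideal br S x -> gen_ideal br S y ->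
      gen_ideal br S (c *: x + y)
  | gi_brl a x : gen_ideal br S x -> gen_ideal br S (br a x)
  | gi_brr a x : gen_ideal br S x -> gen_ideal br S (br x a).

Definition Fit (L : lmodType K) (br : L -> L -> L) : L -> Prop :=
  gen_ideal br (fun x => exists I, nilpotent_ideal br I /\ I x).
End Lie.

(* F^2 is an abelian ideal, hence contained in Fit(F).  Conversely, F^2 is the
   common kernel of the Lie homomorphisms F -> k: modulo F^2 every element is a
   linear combination of free generators, and these are independent because
   every assignment of scalars to them extends to a homomorphism.  So it
   suffices that each phi : F -> k vanishes on every nilpotent ideal I.  If
   x \in I had phi x != 0, pick a generator e with phi e != 0 and a second
   generator f, and map F onto the two-dimensional non-abelian algebra by
   e_i |-> (phi e_i, [i = f]).  There ad x acts on the derived line as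
   multiplication by phi x, yet ad x is nilpotent on [y, x] \in I; this forces
   phi y * psi x = phi x * psi y for all y, and y = e, then y = f, give
   phi x = 0. *)

From HB Require Import structures.
From mathcomp Require Import all_boot all_order all_algebra.
From mathcomp Require Import ring.
From Stdlib Require Import ClassicalEpsilon.
Import GRing.Theory.
Local Open Scope ring_scope.
Set Implicit Arguments. Unset Strict Implicit.

Definition eqb_classic (T : Type) (x y : T) : bool :=
  if excluded_middle_informative (x = y) then true else false.

Lemma eqb_classicP (T : Type) (x y : T) : reflect (x = y) (eqb_classic x y).
Proof. by rewrite /eqb_classic; case: excluded_middle_informative; constructor. Qed.

Section LinearCombination.
Variables (K : fieldType) (X : Type).

Definition lincomb (V : lmodType K) (v : X -> V) (cs : seq (K * X)) : V :=
  \sum_(p <- cs) p.1 *: v p.2.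

Lemma lincomb_eq0 (V : lmodType K) (v : X -> V) (cs : seq (K * X)) :
  (forall t : X -> K^o, lincomb t cs = 0) -> lincomb v cs = 0.
Proof.
move: {2}(size cs) (leqnn (size cs)) => n.
elim: n cs => [|n IH] [|p0 cs] //= size_cs t_vanish; rewrite /lincomb ?big_nil //.
set i0 := p0.2; set same := fun p : K * X => eqb_classic p.2 i0.
have coef_i0 : \sum_(p <- p0 :: cs | same p) p.1 = 0.
  rewrite big_mkcond; apply: etrans (t_vanish (fun i => (eqb_classic i i0)%:R)).
  apply: eq_bigr => p _; rewrite /same.
  by case: eqb_classic; rewrite ?scaler0 // -[RHS]/(_ * 1) mulr1.
have drop_i0 (W : lmodType K) (w : X -> W) : lincomb w (p0 :: cs) =
    lincomb w [seq p <- p0 :: cs | ~~ same p].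
  rewrite /lincomb big_filter (bigID same) /=.
  rewrite (eq_bigr (fun p => p.1 *: w i0)); last by move=> p /eqb_classicP ->.
  by rewrite -scaler_suml coef_i0 scale0r add0r.
rewrite -/(lincomb v _) drop_i0 IH // => [|t]; last by rewrite -drop_i0.
rewrite /= /same (introT (eqb_classicP _ _) erefl) /= size_filter.
exact: leq_trans (count_size _ _) _.
Qed.

End LinearCombination.

Section LieBracket.
Variables (K : fieldType) (L : lmodType K) (br : L -> L -> L).
Hypothesis lieL : is_lie br.

Lemma br0l a : br 0 a = 0.
Proof.
case: lieL => linl _ _ _; apply: (addrI (br 0 a)).
by have := linl a 0 0 1; rewrite !scale1r !addr0.
Qed.

Lemma br0r a : br a 0 = 0.
Proof.
case: lieL => _ linr _ _; apply: (addrI (br a 0)).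
by have := linr a 0 0 1; rewrite !scale1r !addr0.
Qed.

Lemma brZl a (c : K) x : br (c *: x) a = c *: br x a.
Proof. by case: lieL => linl _ _ _; rewrite -[c *: x]addr0 linl br0l addr0. Qed.

Lemma brZr a (c : K) x : br a (c *: x) = c *: br a x.
Proof. by case: lieL => _ linr _ _; rewrite -[c *: x]addr0 linr br0r addr0. Qed.

End LieBracket.

Section LieHom.
Variables (K : fieldType) (L M : lmodType K).
Variables (br : L -> L -> L) (brM : M -> M -> M) (g : L -> M).
Hypothesis homg : lie_hom br brM g.

Lemma lie_hom0 : g 0 = 0.
Proof.
case: homg => ling _; apply: (addrI (g 0)).
by have := ling 1 0 0; rewrite !scale1r !addr0.
Qed.

Lemma lie_homD x y : g (x + y) = g x + g y.
Proof. by case: homg => ling _; rewrite -{1}[x]scale1r ling scale1r. Qed.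

Lemma lie_homZ (c : K) x : g (c *: x) = c *: g x.
Proof. by case: homg => ling _; rewrite -[c *: x]addr0 ling lie_hom0 addr0. Qed.

Lemma lie_hom_iter x z m : g (iter m (br x) z) = iter m (brM (g x)) (g z).
Proof. by case: homg => _ brg; elim: m => //= m <-; rewrite brg. Qed.

Lemma lie_hom_lincomb (X : Type) (v : X -> L) cs :
  g (lincomb v cs) = lincomb (g \o v) cs.
Proof.
elim: cs => [|p cs IH]; rewrite /lincomb ?big_nil ?big_cons ?lie_hom0 //.
by rewrite lie_homD lie_homZ IH.
Qed.

End LieHom.

Section Subalgebra.
Variables (K : fieldType) (L : lmodType K) (br : L -> L -> L) (S : L -> Prop).

Definition subalg_closed : Prop :=
  [/\ S 0, (forall (c : K) x y, S x -> S y -> S (c *: x + y)) &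
      (forall a b, S a -> S b -> S (br a b))].

(* Guarding membership by [subalg_closed] makes the carrier closed under the
   operations for every [S], so the subtype below needs no hypothesis. *)
Definition in_subalg (x : L) : Prop := subalg_closed -> S x.

Definition subalg_pred : pred L :=
  fun x => if excluded_middle_informative (in_subalg x) then true else false.

Lemma subalg_predP x : reflect (in_subalg x) (subalg_pred x).
Proof. by rewrite /subalg_pred; case: excluded_middle_informative; constructor. Qed.

Lemma subalg_pred_submod_closed : subsemimod_closed subalg_pred.
Proof.
split; [split|].
- by apply/subalg_predP => -[].
- move=> x y /subalg_predP Sx /subalg_predP Sy; apply/subalg_predP => clS.
  by case: (clS) => _ linS _; rewrite -[x]scale1r; apply: linS; [apply: Sx|apply: Sy].
- move=> c x /subalg_predP Sx; apply/subalg_predP => clS.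
  by case: (clS) => S0 linS _; rewrite -[c *: x]addr0; apply: linS => //; apply: Sx.
Qed.

Lemma subalg_pred_br a b :
  subalg_pred a -> subalg_pred b -> subalg_pred (br a b).
Proof.
move=> /subalg_predP Sa /subalg_predP Sb; apply/subalg_predP => clS.
by case: (clS) => _ _ brS; apply: brS; [apply: Sa|apply: Sb].
Qed.

End Subalgebra.

Definition subalg (K : fieldType) (L : lmodType K) (br : L -> L -> L) (S : L -> Prop) :=
  {x : L | subalg_pred br S x}.
HB.instance Definition _ (K : fieldType) (L : lmodType K) br S :=
  [isSub of @subalg K L br S for @sval L (subalg_pred br S)].
HB.instance Definition _ (K : fieldType) (L : lmodType K) br S :=
  [Choice of @subalg K L br S by <:].
HB.instance Definition _ (K : fieldType) (L : lmodType K) br S :=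
  GRing.SubChoice_isSubLmodule.Build K L (subalg_pred br S) (@subalg K L br S)
    (subalg_pred_submod_closed br S).

Section SubalgebraBracket.
Variables (K : fieldType) (L : lmodType K) (br : L -> L -> L) (S : L -> Prop).

Definition subalg_br (u w : subalg br S) : subalg br S :=
  exist _ (br (val u) (val w)) (subalg_pred_br (valP u) (valP w)).

Lemma subalg_br_lie : is_lie br -> is_lie subalg_br.
Proof.
case=> linl linr alt jac; split.
- by move=> a x y c; apply: val_inj; rewrite /= linl.
- by move=> a x y c; apply: val_inj; rewrite /= linr.
- by move=> x; apply: val_inj; rewrite /= alt.
- by move=> x y z; apply: val_inj; rewrite /= jac.
Qed.

Lemma subalg_br_metabelian : metabelian br -> metabelian subalg_br.
Proof. by move=> metaL a b c d; apply: val_inj; rewrite /= metaL. Qed.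

End SubalgebraBracket.

Definition zero_br (K : fieldType) (V : lmodType K) (u w : V) : V := 0.

Lemma zero_br_lie (K : fieldType) (V : lmodType K) : is_lie (@zero_br K V).
Proof. by split=> *; rewrite /zero_br ?scaler0 ?addr0. Qed.

Lemma zero_br_metabelian (K : fieldType) (V : lmodType K) :
  metabelian (@zero_br K V).
Proof. by []. Qed.

Lemma abelian_hom_sq_span (K : fieldType) (L V : lmodType K) (br : L -> L -> L)
    (phi : L -> V) :
  lie_hom br (@zero_br K V) phi -> forall s, sq_span br s -> phi s = 0.
Proof.
move=> homphi s; elim=> [a b||c x y _ phix0 _ phiy0].
- by case: homphi => _ ->.
- exact: lie_hom0 homphi.
- by case: homphi => -> _; rewrite phix0 phiy0 scaler0 addr0.
Qed.

Section AffineAlgebra.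
Variable K : fieldType.

Definition aff : lmodType K := (K^o * K^o)%type.

Definition aff_br (u w : aff) : aff := (0, u.1 * w.2 - w.1 * u.2).

Lemma aff_linE (c : K) (u w : aff) : c *: u + w = (c * u.1 + w.1, c * u.2 + w.2).
Proof. by []. Qed.

Lemma aff_addE (u w : aff) : u + w = (u.1 + w.1, u.2 + w.2).
Proof. by []. Qed.

Lemma aff_br_lie : is_lie aff_br.
Proof.
split.
- move=> [a1 a2] [x1 x2] [y1 y2] c.
  by rewrite /aff_br !aff_linE; congr (_, _) => /=; ring.
- move=> [a1 a2] [x1 x2] [y1 y2] c.
  by rewrite /aff_br !aff_linE; congr (_, _) => /=; ring.
- by move=> [x1 x2]; rewrite /aff_br /= subrr.
- move=> [x1 x2] [y1 y2] [z1 z2].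
  by rewrite /aff_br !aff_addE; congr (_, _) => /=; ring.
Qed.

Lemma aff_br_metabelian : metabelian aff_br.
Proof. by move=> a b c d; rewrite /aff_br /= !mul0r subrr. Qed.

Lemma aff_br_iter (u w : aff) m :
  iter m (aff_br u) (aff_br w u) = (0, u.1 ^+ m * (w.1 * u.2 - u.1 * w.2)).
Proof.
elim: m => [|m IH]; first by rewrite expr0 mul1r.
by rewrite iterS IH /aff_br /= mul0r subr0 exprS mulrA.
Qed.

Lemma lie_hom_aff_fst (L : lmodType K) (br : L -> L -> L) (g : L -> aff) :
  lie_hom br aff_br g -> lie_hom br (@zero_br K K^o) (fun y => (g y).1).
Proof. by case=> ling brg; split=> *; rewrite ?ling ?brg. Qed.

End AffineAlgebra.

Section NilpotentIdeal.
Variables (K : fieldType) (L : lmodType K) (br : L -> L -> L) (I : L -> Prop).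

Lemma lcs_ad_iter x y m : is_ideal br I -> I x -> lcs br I m (iter m (br x) (br y x)).
Proof.
case=> _ _ brI Ix; elim: m => [|m IH]; first by apply: lcs_base; case: (brI y x Ix).
exact: lcs_br Ix IH.
Qed.

Lemma nilpotent_ideal_ad_nil x : nilpotent_ideal br I -> I x ->
  exists n, forall y, iter n (br x) (br y x) = 0.
Proof.
by case=> idI [n lcs_n0] Ix; exists n => y; apply/lcs_n0/lcs_ad_iter.
Qed.

End NilpotentIdeal.

Lemma lie_hom_aff_ad_nil (K : fieldType) (L : lmodType K) (br : L -> L -> L)
    (g : L -> aff K) x n :
  lie_hom br (@aff_br K) g -> (forall y, iter n (br x) (br y x) = 0) ->
  (g x).1 != 0 -> forall y, (g y).1 * (g x).2 = (g x).1 * (g y).2.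
Proof.
move=> homg adx_nil gx1 y; apply/eqP; rewrite -subr_eq0.
have := congr1 (fun z => (g z).2) (adx_nil y).
rewrite /= (lie_hom_iter homg); case: (homg) => _ ->.
rewrite aff_br_iter (lie_hom0 homg) /= => /eqP.
by rewrite mulf_eq0 expf_eq0 (negbTE gx1) andbF.
Qed.

Definition metabelian_free_on (K : fieldType) (L : lmodType K) (br : L -> L -> L)
    (X : Type) (iota : X -> L) : Prop :=
  forall (M : lmodType K) (brM : M -> M -> M),
    is_lie brM -> metabelian brM ->
    forall f : X -> M,
      exists g : L -> M,
        [/\ lie_hom br brM g, (forall i, g (iota i) = f i) &
            (forall h : L -> M, lie_hom br brM h ->
               (forall i, h (iota i) = f i) -> forall x, h x = g x)].

Section FreeMetabelian.
Variables (K : fieldType) (L : lmodType K) (br : L -> L -> L).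
Hypotheses (lieL : is_lie br) (metaL : metabelian br).
Variables (X : Type) (iota : X -> L).
Hypothesis freeL : metabelian_free_on br iota.

Lemma lie_hom_ext (M : lmodType K) (brM : M -> M -> M) (h1 h2 : L -> M) :
  is_lie brM -> metabelian brM -> lie_hom br brM h1 -> lie_hom br brM h2 ->
  (forall i, h1 (iota i) = h2 (iota i)) -> forall x, h1 x = h2 x.
Proof.
move=> lieM metaM hom1 hom2 eq12 x.
have [g [_ _ uniq_g]] := freeL lieM metaM (fun i => h2 (iota i)).
by rewrite (uniq_g h1 hom1 eq12) (uniq_g h2 hom2 (fun i => erefl)).
Qed.

Lemma free_ind (S : L -> Prop) :
  subalg_closed br S -> (forall i, S (iota i)) -> forall x, S x.
Proof.
move=> clS Siota x.
have Spred_iota i : subalg_pred br S (iota i) by apply/subalg_predP.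
have [g [homg g_iota _]] :=
  freeL (subalg_br_lie S lieL) (@subalg_br_metabelian _ _ _ S metaL)
    (fun i => exist _ (iota i) (Spred_iota i) : subalg br S).
have homvg : lie_hom br br (val \o g).
  by case: homg => ling brg; split=> *; rewrite /= ?ling ?brg.
have -> : x = val (g x).
  have homid : lie_hom br br id by [].
  by apply: (lie_hom_ext lieL metaL homid homvg) => i; rewrite /= g_iota.
by have /subalg_predP := valP (g x); apply.
Qed.

Lemma sq_span_lincomb x : exists cs, sq_span br (x - lincomb iota cs).
Proof.
move: x; apply: (free_ind (S := fun x => exists cs, sq_span br (x - lincomb iota cs))).
  2: by move=> i; exists [:: (1, i)]; rewrite /lincomb big_seq1 scale1r subrr; apply: sq_0.
split.
- by exists [::]; rewrite /lincomb big_nil subr0; apply: sq_0.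
- move=> c x y [cx sq_x] [cy sq_y].
  exists ([seq (c * p.1, p.2) | p <- cx] ++ cy).
  rewrite /lincomb big_cat big_map /=.
  under eq_bigr => p _ do rewrite -scalerA.
  rewrite -scaler_sumr -/(lincomb iota cx) -/(lincomb iota cy).
  have -> : c *: x + y - (c *: lincomb iota cx + lincomb iota cy) =
      c *: (x - lincomb iota cx) + (y - lincomb iota cy).
    by rewrite scalerBr opprD addrACA.
  exact: sq_lin.
- by move=> a b _ _; exists [::]; rewrite /lincomb big_nil subr0; apply: sq_br.
Qed.

Lemma sq_span_abelian_kernel x :
  (forall phi : L -> K^o, lie_hom br (@zero_br K K^o) phi -> phi x = 0) ->
  sq_span br x.
Proof.
move=> ker_x; have [cs sq_x] := sq_span_lincomb x.
suff lc0 : lincomb iota cs = 0 by rewrite lc0 subr0 in sq_x.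
apply: lincomb_eq0 => t.
have [g [homg g_iota _]] := freeL (@zero_br_lie K K^o) (@zero_br_metabelian K K^o) t.
rewrite -(ker_x g homg) -(subrK (lincomb iota cs) x) (lie_homD homg).
rewrite (abelian_hom_sq_span homg sq_x) add0r (lie_hom_lincomb homg).
by apply: eq_bigr => p _; rewrite /= g_iota.
Qed.

Lemma exists_other_generator : (exists a b, br a b <> 0) ->
  forall k : X, exists j, j <> k.
Proof.
move=> [a [b brab]] k; apply: NNPP => no_other.
have iota_k i : iota i = iota k.
  by congr iota; apply: NNPP => ik; apply: no_other; exists i.
case: (lieL) => _ _ alt _.
have line x : exists c : K, x = c *: iota k.
  move: x; apply: (free_ind (S := fun x => exists c : K, x = c *: iota k)).
    2: by move=> i; exists 1; rewrite scale1r iota_k.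
  split.
  - by exists 0; rewrite scale0r.
  - by move=> c x y [cx ->] [cy ->]; exists (c * cx + cy); rewrite scalerDl scalerA.
  - move=> _ _ [ca ->] [cb ->]; exists 0.
    by rewrite brZl // brZr // alt !scaler0 scale0r.
apply: brab; have [ca ->] := line a; have [cb ->] := line b.
by rewrite brZl // brZr // alt !scaler0.
Qed.

Lemma abelian_hom_nilpotent_ideal (I : L -> Prop) x (phi : L -> K^o) :
  (exists a b, br a b <> 0) -> nilpotent_ideal br I -> I x ->
  lie_hom br (@zero_br K K^o) phi -> phi x = 0.
Proof.
move=> nonab nilI Ix homphi; apply: NNPP => /eqP phix.
have [n adx_nil] := nilpotent_ideal_ad_nil nilI Ix.
have [k phik] : exists k, phi (iota k) != 0.
  apply: NNPP => phi_iota0; have /negP := phix; apply; apply/eqP.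
  have hom0 : lie_hom br (@zero_br K K^o) (fun=> 0).
    by split=> *; rewrite /zero_br ?scaler0 ?addr0.
  apply: (lie_hom_ext (@zero_br_lie K K^o) (@zero_br_metabelian K K^o)
    homphi hom0) => i.
  by apply: NNPP => phii; apply: phi_iota0; exists i; apply/eqP.
have [j jk] := exists_other_generator nonab k.
pose f i : aff K := (phi (iota i), (eqb_classic i j)%:R).
have [g [homg g_iota _]] := freeL (@aff_br_lie K) (@aff_br_metabelian K) f.
have g1 y : (g y).1 = phi y.
  apply: (lie_hom_ext (@zero_br_lie K K^o) (@zero_br_metabelian K K^o)
    (lie_hom_aff_fst homg) homphi) => i.
  by rewrite /= g_iota.
have gx1 : (g x).1 != 0 by rewrite g1.
have proportional y := lie_hom_aff_ad_nil homg adx_nil gx1 y.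
have gx2 : (g x).2 = 0.
  move/eqP: (proportional (iota k)); rewrite g_iota !g1 /=.
  case: eqb_classicP => [kj|_]; first by case: jk.
  by rewrite mulr0n mulr0 mulf_eq0 (negbTE phik) => /eqP.
move/eqP: (proportional (iota j)); rewrite g_iota gx2 !g1 /=.
case: eqb_classicP => // _.
by rewrite mulr0 mulr1n mulr1 eq_sym (negbTE phix).
Qed.

Lemma Fit_sq_span x : (exists a b, br a b <> 0) -> Fit br x -> sq_span br x.
Proof.
move=> nonab; elim=> [y [I [nilI Iy]]||c y z _ sq_y _ sq_z|a y _ _|a y _ _].
- apply: sq_span_abelian_kernel => phi homphi.
  exact: abelian_hom_nilpotent_ideal nonab nilI Iy homphi.
- exact: sq_0.
- exact: sq_lin.
- exact: sq_br.
- exact: sq_br.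
Qed.

End FreeMetabelian.

Section DerivedIdeal.
Variables (K : fieldType) (L : lmodType K) (br : L -> L -> L).
Hypotheses (lieL : is_lie br) (metaL : metabelian br).

Lemma br_sq_span a b : sq_span br a -> sq_span br b -> br a b = 0.
Proof.
case: lieL => linl linr _ _.
elim=> [a1 a2||c x y _ brx0 _ bry0] sq_b; last first.
- by rewrite linl brx0 // bry0 // scaler0 addr0.
- exact: br0l.
elim: sq_b => [b1 b2||c x y _ brx0 _ bry0]; first exact: metaL.
- exact: br0r.
- by rewrite linr brx0 bry0 scaler0 addr0.
Qed.

Lemma sq_span_ideal : is_ideal br (sq_span br).
Proof.
split; [exact: sq_0 | by move=> *; apply: sq_lin | by move=> a x _; split; apply: sq_br].
Qed.

Lemma lcs1_sq_span m y : lcs br (sq_span br) m y -> m = 1%N -> y = 0.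
Proof.
elim=> [x _|n a b sq_a lcs_b _|n|n c x z _ x0 _ z0] m1 //.
- by case: n m1 lcs_b => // _ lcs_b; inversion lcs_b; apply: br_sq_span.
- by rewrite x0 // z0 // scaler0 addr0.
Qed.

Lemma sq_span_nilpotent_ideal : nilpotent_ideal br (sq_span br).
Proof.
by split; [exact: sq_span_ideal | exists 1%N => y /lcs1_sq_span; apply].
Qed.

Lemma sq_span_Fit x : sq_span br x -> Fit br x.
Proof.
by move=> sq_x; apply: gi_base; exists (sq_span br); split; last exact: sq_x;
  exact: sq_span_nilpotent_ideal.
Qed.

End DerivedIdeal.

Theorem proposition2p3p2 (K : fieldType) (L : lmodType K) (br : L -> L -> L) :
  free_metabelian br ->
  (exists a b : L, br a b <> 0) ->
  forall x : L, Fit br x <-> sq_span br x.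
Proof.
move=> [lieL [metaL [X [iota freeL]]]] nonab x; split.
- exact: (Fit_sq_span lieL metaL (iota:=iota) freeL nonab).
- exact: (sq_span_Fit lieL metaL (x:=x)).
Qed.
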